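(* Let $G$ be a finite simple graph and $v$ a vertex of $G$ of degree $d$. Then \[-d\le \mathrm{mur}(G)-\mathrm{mur}(G\setminus\{v\})\le d+2,\] where $G\setminus\{v\}$ is the graph obtained from $G$ by deleting $v$ and its incident edges.
   Context: For a finite simple undirected graph $G$ on vertices $v_1,\dots,v_n$, let $A_G$ be its $(0,1)$-adjacency matrix, $D_G=\mathrm{diag}(d_1,\dots,d_n)$ with $d_i$ the degree of $v_i$, $I$ the $n\times n$ identity matrix and $J$ the $n\times n$ all-ones matrix. A universal adjacency matrix of $G$ is any matrix $\alpha A_G+\beta I+\gamma J+\delta D_G$ with real scalars $\alpha,\beta,\gamma,\delta$ and $\alpha\neq 0$. The minimum universal rank $\mathrm{mur}(G)$ is the minimum rank over all universal adjacency matrices of $G$. *)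

From HB Require Import structures.
From mathcomp Require Import all_boot all_order all_algebra.
From mathcomp Require Import boolp reals.
Set Implicit Arguments. Unset Strict Implicit. Unset Printing Implicit Defensive.
Import Order.TTheory GRing.Theory Num.Theory.
Local Open Scope ring_scope.

Definition simple_graph (T : finType) (e : rel T) : Prop :=
  symmetric e /\ irreflexive e.

Definition deg (T : finType) (e : rel T) (x : T) : nat := #|[set y | e x y]|.

Section Mats.
Variable R : realType.
Variable T : finType.
Variable e : rel T.

Definition adjmx : 'M[R]_#|T| :=
  \matrix_(i, j) (e (enum_val i) (enum_val j))%:R.

Definition degmx : 'M[R]_#|T| :=
  \matrix_(i, j) ((i == j)%:R * (deg e (enum_val i))%:R).

Definition univ_adj (a b c d : R) : 'M[R]_#|T| :=
  a *: adjmx + b%:M + c *: const_mx 1 + d *: degmx.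

Definition univ_rank_pred : pred nat :=
  fun k => `[< exists a b c d : R, a != 0 /\ \rank (univ_adj a b c d) = k >].

Lemma univ_rank_ex : exists k, univ_rank_pred k.
Proof.
exists (\rank (univ_adj 1 0 0 0)); apply/asboolP.
by exists 1, 0, 0, 0; split => //; exact: oner_neq0.
Qed.

Definition mur : nat := ex_minn univ_rank_ex.
End Mats.

Definition del_vertex (T : finType) (e : rel T) (v : T) :
  rel {x : T | x != v} := fun x y => e (val x) (val y).
Arguments del_vertex {T} e v.

From HB Require Import structures.
From mathcomp Require Import all_boot all_order all_algebra.
From mathcomp Require Import boolp reals zify.
Set Implicit Arguments. Unset Strict Implicit. Unset Printing Implicit Defensive.
Import Order.TTheory GRing.Theory Num.Theory.
Local Open Scope ring_scope.

(* Deleting the row and column of v from a universal adjacency matrix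
   alpha A + beta I + gamma J + delta D of G gives the matrix of G \ v with the same
   parameters, up to the correction delta D_N, where D_N is the 0/1 diagonal matrix
   of the neighbours of v (their degrees drop by one).  Such a principal submatrix
   has rank between rank M - 2 and rank M, and D_N has rank at most deg v.  Applying
   this to an optimal matrix of G, resp. of G \ v, gives the two bounds. *)

Section RankBounds.
Variable F : fieldType.

Lemma mxrank_sum_le (I : finType) (P : pred I) m n (A : I -> 'M[F]_(m, n)) :
  (\rank (\sum_(i | P i) A i)%R <= \sum_(i | P i) \rank (A i))%N.
Proof.
apply: (big_ind2 (fun (B : 'M[F]_(m, n)) k => \rank B <= k)%N) => //.
  by rewrite mxrank0.
by move=> B1 k1 B2 k2 h1 h2; exact: leq_trans (mxrank_add _ _) (leq_add h1 h2).
Qed.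

Lemma mxrank_diag_mx_le n (d : 'rV[F]_n) :
  (\rank (diag_mx d) <= #|[pred i | (d 0 i != 0)%R]|)%N.
Proof.
rewrite diag_mx_sum_delta (bigID (fun i => d 0 i != 0)) /= [X in _ + X]big1 ?addr0; last first.
  by move=> i /negPn/eqP ->; rewrite scale0r.
apply: leq_trans (mxrank_sum_le _ _) _; rewrite -sum1_card leq_sum // => i _.
by rewrite (leq_trans (mxrank_scale _ _)) ?mxrank_delta.
Qed.

Lemma mxrank_mxsub_le m1 n1 m2 n2 (f : 'I_m2 -> 'I_m1) (g : 'I_n2 -> 'I_n1)
    (A : 'M[F]_(m1, n1)) :
  (\rank (mxsub f g A) <= \rank A)%N.
Proof.
rewrite mxsubrc (leq_trans (mxrankS (rowsub_sub _ _))) //.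
by rewrite -mxrank_tr trmx_mxsub -[leqRHS]mxrank_tr mxrankS ?rowsub_sub.
Qed.

Section DeleteIndex.
Variables (m n : nat) (f : 'I_m -> 'I_n) (r : 'I_n).
Hypothesis f_inj : injective f.
Hypothesis f_neq : forall i, f i != r.
Hypothesis f_onto : forall j, j != r -> exists i, f i = j.

Lemma rowsub_id_split :
  (rowsub f 1%:M)^T *m rowsub f 1%:M + delta_mx r r = 1%:M :> 'M[F]_n.
Proof.
apply/matrixP => j l; rewrite !mxE.
under eq_bigr => i _ do rewrite !mxE.
have [-> | jr] := eqVneq j r.
  by rewrite big1 ?add0r ?eqxx 1?eq_sym // => i _; rewrite (negbTE (f_neq i)) mul0r.
have [i0 def_j] := f_onto jr; rewrite -def_j (bigD1 i0) //= eqxx mul1r big1 ?addr0 //.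
by move=> i ni; rewrite (inj_eq f_inj) (negbTE ni) mul0r.
Qed.

Lemma mxrank_rowsub_add1 p (A : 'M[F]_(n, p)) :
  (\rank A <= \rank (rowsub f A) + 1)%N.
Proof.
rewrite -{1}[A]mul1mx -rowsub_id_split mulmxDl -mulmxA -rowsubE.
apply: leq_trans (mxrank_add _ _) (leq_add (mxrankM_maxr _ _) _).
by rewrite -[leqRHS](mxrank_delta F r r) mxrankM_maxl.
Qed.

Lemma mxrank_mxsub_add2 (A : 'M[F]_n) : (\rank A <= \rank (mxsub f f A) + 2)%N.
Proof.
have col_bound : (\rank A <= \rank (colsub f A) + 1)%N.
  by rewrite -mxrank_tr -[X in (_ <= X + _)%N]mxrank_tr trmx_mxsub mxrank_rowsub_add1.
rewrite mxsubrc (leq_trans col_bound) // -[2%N]/(1 + 1)%N addnA leq_add2r.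
exact: mxrank_rowsub_add1.
Qed.

End DeleteIndex.
End RankBounds.

Section MinimumUniversalRank.
Variables (R : realType) (T : finType) (e : rel T).

Lemma mur_le_rank (a b c d : R) :
  a != 0 -> (mur R e <= \rank (univ_adj e a b c d))%N.
Proof.
by move=> a0; rewrite /mur; case: ex_minnP => k _; apply; apply/asboolP; exists a, b, c, d.
Qed.

Lemma mur_attained :
  exists a b c d : R, a != 0 /\ \rank (univ_adj e a b c d) = mur R e.
Proof. by rewrite /mur; case: ex_minnP => k /asboolP. Qed.

End MinimumUniversalRank.

Section DeleteVertex.
Variables (R : realType) (T : finType) (e : rel T) (v : T).

Local Notation T' := {x : T | x != v}.

Definition del_index (i : 'I_#|{: T'}|) : 'I_#|T| := enum_rank (val (enum_val i)).

Lemma del_indexK i : enum_val (del_index i) = val (enum_val i).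
Proof. exact: enum_rankK. Qed.

Lemma del_index_inj : injective del_index.
Proof.
move=> i k /(congr1 enum_val); rewrite !del_indexK => /val_inj.
exact: enum_val_inj.
Qed.

Lemma del_index_neq i : del_index i != enum_rank v.
Proof.
apply: contraTneq (valP (enum_val i)) => /(congr1 enum_val).
by rewrite del_indexK enum_rankK => ->; rewrite eqxx.
Qed.

Lemma del_index_onto j : j != enum_rank v -> exists i, del_index i = j.
Proof.
move=> jv; have hv : enum_val j != v.
  by apply: contraNneq jv => <-; rewrite enum_valK.
by exists (enum_rank (exist _ (enum_val j) hv : T')); rewrite /del_index enum_rankK enum_valK.
Qed.

Lemma deg_split x : deg e x = (#|[set y : T' | e x (val y)]| + e x v)%N.
Proof.
rewrite /deg (cardsD1 v) inE addnC; congr (_ + _)%N.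
rewrite -(card_imset _ val_inj); apply: eq_card => y; rewrite !inE.
apply/andP/imsetP => [[yv exy] | [y' exy' ->]].
  by exists (exist _ y yv : T'); rewrite ?inE.
by rewrite inE in exy'; split => //; exact: (valP y').
Qed.

Definition nbr_diag : 'M[R]_#|{: T'}| :=
  diag_mx (\row_i (e v (val (enum_val i)))%:R).

Lemma mxsub_univ_adj (a b c d : R) : symmetric e ->
  mxsub del_index del_index (univ_adj e a b c d) =
  univ_adj (del_vertex e v) a b c d + d *: nbr_diag.
Proof.
move=> e_sym; apply/matrixP => i k; rewrite !mxE !del_indexK (inj_eq del_index_inj).
rewrite deg_split (e_sym _ v) /del_vertex natrD.
by case: eqP => _; rewrite ?mulr0n ?mulr1n ?mul0r ?mul1r ?mulr0 ?addr0 ?mulrDr ?addrA.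
Qed.

Lemma mxrank_nbr_diag : irreflexive e -> (\rank nbr_diag <= deg e v)%N.
Proof.
move=> e_irr; apply: leq_trans (mxrank_diag_mx_le _) _.
rewrite deg_split e_irr addn0 -(card_imset _ enum_val_inj) subset_leq_card //.
apply/subsetP => y /imsetP [i]; rewrite !inE mxE => evi ->.
by apply: contraNT evi => /negPf ->.
Qed.

Lemma mxrank_addr_nbr_diag (M : 'M[R]_#|{: T'}|) d :
  irreflexive e -> (\rank (M + d *: nbr_diag)%R <= \rank M + deg e v)%N.
Proof.
move=> e_irr; apply: leq_trans (mxrank_add _ _) _; rewrite leq_add2l.
exact: leq_trans (mxrank_scale _ _) (mxrank_nbr_diag e_irr).
Qed.

Lemma mur_del_vertex_le : simple_graph e ->
  (mur R (del_vertex e v) <= mur R e + deg e v)%N.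
Proof.
move=> [e_sym e_irr]; have [a [b [c [d [a0 <-]]]]] := mur_attained R e.
apply: leq_trans (mur_le_rank _ b c d a0) _.
rewrite -[univ_adj _ _ _ _ _](addrK (d *: nbr_diag)) -mxsub_univ_adj // -scaleNr.
apply: leq_trans (mxrank_addr_nbr_diag _ _ e_irr) _.
by rewrite leq_add2r mxrank_mxsub_le.
Qed.

Lemma mur_le_del_vertex : simple_graph e ->
  (mur R e <= mur R (del_vertex e v) + deg e v + 2)%N.
Proof.
move=> [e_sym e_irr]; have [a [b [c [d [a0 <-]]]]] := mur_attained R (del_vertex e v).
apply: leq_trans (mur_le_rank _ b c d a0) _.
apply: leq_trans (mxrank_mxsub_add2 del_index_inj (@del_index_neq) del_index_onto _) _.
by rewrite leq_add2r mxsub_univ_adj // mxrank_addr_nbr_diag.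
Qed.

End DeleteVertex.

Theorem theorem17 (R : realType) (T : finType) (e : rel T) (v : T) :
  simple_graph e ->
  - ((deg e v)%:Z) <= (mur R e)%:Z - (mur R (del_vertex e v))%:Z
  /\ (mur R e)%:Z - (mur R (del_vertex e v))%:Z <= (deg e v)%:Z + 2.
Proof.
move=> G_simple.
have lower := mur_del_vertex_le R v G_simple.
have upper := mur_le_del_vertex R v G_simple.
by split; lia.
Qed.
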